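(* For every sequent $\Gamma\Rightarrow\Delta$ of $\mathtt{TPDL}$: if $\Gamma\Rightarrow\Delta$ is provable in the cyclic proof system $\mathtt{CGTPDL}$, then $M\models\Gamma\Rightarrow\Delta$ for every model $M$.
   Context: Fix sets $\mathsf{Prop}$ and $\mathsf{AtProg}$. $\mathtt{TPDL}$ formulas/programs: $\varphi ::= \bot \mid p \mid (\varphi\to\varphi) \mid [\pi]\varphi \mid [\pi]^{\leftarrow}\varphi$, $\pi ::= \alpha \mid \pi;\pi \mid \pi\cup\pi \mid \pi^{*} \mid \varphi?$. For a set $\Gamma$, $[\pi]\Gamma=\{[\pi]\varphi:\varphi\in\Gamma\}$, similarly $[\pi]^{\leftarrow}\Gamma$. A model is $M=(W,(R_\alpha),V)$, $W\neq\emptyset$, $R_\alpha\subseteq W\times W$, $V:W\to\mathcal P(\mathsf{Prop})$; $R_{\pi_0;\pi_1}$ composition, $R_{\pi_0\cup\pi_1}$ union, $R_{\pi^*}$ reflexive–transitive closure, $R_{\psi?}=\{(w,w):M,w\models\psi\}$; $M,w\not\models\bot$, $M,w\models p$ iff $p\in V(w)$, $\to$ classical, $M,w\models[\pi]\varphi$ iff $\varphi$ holds at all $v$ with $wR_\pi v$, $M,w\models[\pi]^{\leftarrow}\varphi$ iff $\varphi$ holds at all $v$ with $vR_\pi w$. A sequent $\Gamma\Rightarrow\Delta$ is a pair of finite sets of formulas; $M\models\Gamma\Rightarrow\Delta$ means at every state where all of $\Gamma$ hold some formula of $\Delta$ holds. Rules of $\mathtt{CGTPDL}$ (premises / conclusion):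 (Ax) / $\Gamma\Rightarrow\Delta$ with $\Gamma\cap\Delta\neq\emptyset$; ($\bot$) / $\Gamma,\bot\Rightarrow\Delta$; ($\to$L) $\Gamma\Rightarrow\varphi,\Delta$ and $\Gamma,\psi\Rightarrow\Delta$ / $\Gamma,\varphi\to\psi\Rightarrow\Delta$; ($\to$R) $\Gamma,\varphi\Rightarrow\psi,\Delta$ / $\Gamma\Rightarrow\varphi\to\psi,\Delta$; (Wk) $\Gamma\Rightarrow\Delta$ / $\Gamma'\Rightarrow\Delta'$ with $\Gamma\subseteq\Gamma',\Delta\subseteq\Delta'$; (Cut) $\Gamma\Rightarrow\varphi,\Delta$ and $\Gamma,\varphi\Rightarrow\Delta$ / $\Gamma\Rightarrow\Delta$; ($[\,]$) $\Gamma\Rightarrow\varphi,[\pi]^{\leftarrow}\Delta$ / $[\pi]\Gamma\Rightarrow[\pi]\varphi,\Delta$; ($[\,]^{\leftarrow}$) $\Gamma\Rightarrow\varphi,[\pi]\Delta$ / $[\pi]^{\leftarrow}\Gamma\Rightarrow[\pi]^{\leftarrow}\varphi,\Delta$; ($[;]$L) $\Gamma,[\pi_0][\pi_1]\varphi\Rightarrow\Delta$ / $\Gamma,[\pi_0;\pi_1]\varphi\Rightarrow\Delta$; ($[;]$R) $\Gamma\Rightarrow[\pi_0][\pi_1]\varphi,\Delta$ / $\Gamma\Rightarrow[\pi_0;\pi_1]\varphi,\Delta$; ($[\cup]$L) $\Gamma,[\pi_0]\varphi,[\pi_1]\varphi\Rightarrow\Delta$ / $\Gamma,[\pi_0\cup\pi_1]\varphi\Rightarrow\Delta$;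 ($[\cup]$R) $\Gamma\Rightarrow\Delta,[\pi_0]\varphi$ and $\Gamma\Rightarrow\Delta,[\pi_1]\varphi$ / $\Gamma\Rightarrow[\pi_0\cup\pi_1]\varphi,\Delta$; ($[*]$L) $\Gamma,\varphi,[\pi][\pi^*]\varphi\Rightarrow\Delta$ / $\Gamma,[\pi^*]\varphi\Rightarrow\Delta$; ($[?]$L) $\Gamma\Rightarrow\varphi,\Delta$ and $\Gamma,\psi\Rightarrow\Delta$ / $\Gamma,[\varphi?]\psi\Rightarrow\Delta$; ($[?]$R) $\Gamma,\varphi\Rightarrow\psi,\Delta$ / $\Gamma\Rightarrow[\varphi?]\psi,\Delta$; (C-s) $\Gamma\Rightarrow\varphi,\Delta$ and $\Gamma\Rightarrow[\pi][\pi^*]\varphi,\Delta$ / $\Gamma\Rightarrow[\pi^*]\varphi,\Delta$. The principal formula of a rule instance is the distinguished formula introduced in its conclusion. A pre-proof is a pair $(\mathcal D,\mathcal C)$: $\mathcal D$ is a finite tree of sequents in which each inner node with its children is an instance of a rule (conclusion/premises), and each leaf is either an instance of Ax or $\bot$ or a bud; $\mathcal C$ maps each bud to a companion, an inner node labelled by the same sequent. The derivation graph is obtained from $\mathcal D$ by identifying each bud with its companion. A path is a (finite or infinite) sequence of nodes $(\Gamma_i\Rightarrow\Delta_i)_i$ of this graph with each $\Gamma_{i+1}\Rightarrow\Delta_{i+1}$ a premise of the rule instance concluding $\Gamma_i\Rightarrow\Delta_i$. A trace following a path is a sequence of formulas $(\tau_i)$ with $\tau_i\in\Delta_i$ for all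 $i$ such that: if node $i$ concludes ($\to$R) with principal $\varphi\to\psi$, then either $\tau_i=\varphi\to\psi$ and $\tau_{i+1}=\psi$, or $\tau_{i+1}=\tau_i$; if it concludes ($[\,]$) with principal $[\pi]\varphi$ then $\tau_i=[\pi]\varphi$ and $\tau_{i+1}=\varphi$; if ($[\,]^{\leftarrow}$) with principal $[\pi]^{\leftarrow}\varphi$ then $\tau_i=[\pi]^{\leftarrow}\varphi$ and $\tau_{i+1}=\varphi$; if ($[;]$R) with principal $[\pi_0;\pi_1]\varphi$, either $\tau_i$ is it and $\tau_{i+1}=[\pi_0][\pi_1]\varphi$, or $\tau_{i+1}=\tau_i$; if ($[\cup]$R) with principal $[\pi_0\cup\pi_1]\varphi$ and the next node is the premise containing $[\pi_j]\varphi$, either $\tau_i$ is the principal formula and $\tau_{i+1}=[\pi_j]\varphi$, or $\tau_{i+1}=\tau_i$; if ($[?]$R) with principal $[\varphi?]\psi$, either $\tau_i$ is it and $\tau_{i+1}=\psi$, or $\tau_{i+1}=\tau_i$; if (C-s) with principal $[\pi^*]\varphi$ and next node the premise with $\varphi$, either $\tau_i=[\pi^*]\varphi$ and $\tau_{i+1}=\varphi$, or $\tau_{i+1}=\tau_i$; if (C-s) with next node the premise with $[\pi][\pi^*]\varphi$, either $\tau_i=[\pi^*]\varphi$ and $\tau_{i+1}=[\pi][\pi^*]\varphi$ (then $i$ is a progress point), or $\tau_{i+1}=\tau_i$; for every other rule, $\tau_{i+1}=\tau_i$. A trace is infinitely progressing if it has infinitely many progress points. The derivation graph satisfies the global trace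 condition if for every infinite path $(\Gamma_i\Rightarrow\Delta_i)_{i\ge0}$ there is $k$ and an infinitely progressing trace following $(\Gamma_i\Rightarrow\Delta_i)_{i\ge k}$. A $\mathtt{CGTPDL}$ proof of a sequent is a pre-proof with that sequent at the root whose derivation graph satisfies the global trace condition; the sequent is then provable in $\mathtt{CGTPDL}$. *)

From Stdlib Require Import List Relations Arith.
Import ListNotations.
Set Implicit Arguments.

Section TPDL.
Context (Prp AtProg : Type).

Inductive formula : Type :=
| FBot : formula
| FAtom : Prp -> formula
| FImp : formula -> formula -> formula
| FBox : program -> formula -> formula
| FBoxC : program -> formula -> formula
with program : Type :=
| PAt : AtProg -> program
| PSeq : program -> program -> program
| PUn : program -> program -> program
| PStar : program -> program
| PTest : formula -> program.

Record model : Type := {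
  W : Type;
  W_nonempty : inhabited W;
  Racc : AtProg -> W -> W -> Prop;
  Val : W -> Prp -> Prop
}.

Fixpoint sat (M : model) (f : formula) {struct f} : W M -> Prop :=
  match f with
  | FBot => fun _ => False
  | FAtom p => fun w => Val M w p
  | FImp f g => fun w => sat M f w -> sat M g w
  | FBox pi f => fun w => forall v, rel M pi w v -> sat M f v
  | FBoxC pi f => fun w => forall v, rel M pi v w -> sat M f v
  end
with rel (M : model) (pi : program) {struct pi} : W M -> W M -> Prop :=
  match pi with
  | PAt a => Racc M a
  | PSeq p q => fun w v => exists u, rel M p w u /\ rel M q u v
  | PUn p q => fun w v => rel M p w v \/ rel M q w v
  | PStar p => clos_refl_trans (W M) (rel M p)
  | PTest f => fun w v => w = v /\ sat M f w
  end.

(** Sequents: pairs of finite sets, represented by lists read as sets *)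
Definition sequent : Type := (list formula * list formula)%type.

Definition set_eq (l l' : list formula) : Prop := forall x, In x l <-> In x l'.
Definition seq_eq (s s' : sequent) : Prop := set_eq (fst s) (fst s') /\ set_eq (snd s) (snd s').

Definition valid (M : model) (s : sequent) : Prop :=
  forall w : W M, (forall f, In f (fst s) -> sat M f w) -> exists f, In f (snd s) /\ sat M f w.

Inductive rname : Type :=
| RAx | RBot
| RImpL (f g : formula) | RImpR (f g : formula)
| RWk | RCut (f : formula)
| RBox (pi : program) (f : formula) | RBoxC (pi : program) (f : formula)
| RSeqL (p q : program) (f : formula) | RSeqR (p q : program) (f : formula)
| RUnL (p q : program) (f : formula) | RUnR (p q : program) (f : formula)
| RStarL (p : program) (f : formula)
| RTestL (f g : formula) | RTestR (f g : formula)
| RCs (p : program) (f : formula).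

Definition inst (c : sequent) (ps : list sequent) (C : sequent) (Ps : list sequent) : Prop :=
  seq_eq c C /\ Forall2 seq_eq ps Ps.

Definition rule_inst (r : rname) (c : sequent) (ps : list sequent) : Prop :=
  match r with
  | RAx => ps = [] /\ exists x, In x (fst c) /\ In x (snd c)
  | RBot => ps = [] /\ In FBot (fst c)
  | RImpL f g => exists G D, inst c ps (FImp f g :: G, D) [(G, f :: D); (g :: G, D)]
  | RImpR f g => exists G D, inst c ps (G, FImp f g :: D) [(f :: G, g :: D)]
  | RWk => exists G D, ps = [(G, D)] /\ incl G (fst c) /\ incl D (snd c)
  | RCut f => exists G D, inst c ps (G, D) [(G, f :: D); (f :: G, D)]
  | RBox pi f => exists G D,
      inst c ps (map (FBox pi) G, FBox pi f :: D) [(G, f :: map (FBoxC pi) D)]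
  | RBoxC pi f => exists G D,
      inst c ps (map (FBoxC pi) G, FBoxC pi f :: D) [(G, f :: map (FBox pi) D)]
  | RSeqL p q f => exists G D,
      inst c ps (FBox (PSeq p q) f :: G, D) [(FBox p (FBox q f) :: G, D)]
  | RSeqR p q f => exists G D,
      inst c ps (G, FBox (PSeq p q) f :: D) [(G, FBox p (FBox q f) :: D)]
  | RUnL p q f => exists G D,
      inst c ps (FBox (PUn p q) f :: G, D) [(FBox p f :: FBox q f :: G, D)]
  | RUnR p q f => exists G D,
      inst c ps (G, FBox (PUn p q) f :: D) [(G, FBox p f :: D); (G, FBox q f :: D)]
  | RStarL p f => exists G D,
      inst c ps (FBox (PStar p) f :: G, D) [(f :: FBox p (FBox (PStar p) f) :: G, D)]
  | RTestL f g => exists G D,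
      inst c ps (FBox (PTest f) g :: G, D) [(G, f :: D); (g :: G, D)]
  | RTestR f g => exists G D,
      inst c ps (G, FBox (PTest f) g :: D) [(f :: G, g :: D)]
  | RCs p f => exists G D,
      inst c ps (G, FBox (PStar p) f :: D) [(G, f :: D); (G, FBox p (FBox (PStar p) f) :: D)]
  end.

(** Finite derivation trees: a node carries its sequent and rule (Ax/Bot
    leaves are nodes with no children); buds are leaves without a rule. *)
Inductive ptree : Type :=
| PNode : sequent -> rname -> list ptree -> ptree
| PBud : sequent -> ptree.

Definition label (t : ptree) : sequent :=
  match t with PNode s _ _ => s | PBud s => s end.

Fixpoint subtree_at (t : ptree) (a : list nat) : option ptree :=
  match a with
  | [] => Some t
  | k :: a' =>
      match t with
      | PNode _ _ cs => match nth_error cs k with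
                        | Some c => subtree_at c a'
                        | None => None
                        end
      | PBud _ => None
      end
  end.

(** Pre-proof (t, C): C maps (addresses of) buds to (addresses of) companions *)
Definition preproof (t : ptree) (C : list nat -> list nat) : Prop :=
  (forall a s r cs, subtree_at t a = Some (PNode s r cs) -> rule_inst r s (map label cs)) /\
  (forall a s, subtree_at t a = Some (PBud s) ->
     exists s' r cs, subtree_at t (C a) = Some (PNode s' r cs) /\ cs <> [] /\ seq_eq s' s).

(** Edges of the derivation graph: u --k--> v, v being the k-th premise of
    the rule instance at u, where buds are identified with their companions. *)
Definition edge (t : ptree) (C : list nat -> list nat) (u : list nat) (k : nat) (v : list nat) : Prop :=
  exists s r cs c, subtree_at t u = Some (PNode s r cs) /\ nth_error cs k = Some c /\
    match c with
    | PNode _ _ _ => v = u ++ [k]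
    | PBud _ => v = C (u ++ [k])
    end.

Definition trace_step (r : rname) (k : nat) (a b : formula) : Prop :=
  match r with
  | RImpR f g => (a = FImp f g /\ b = g) \/ b = a
  | RBox pi f => a = FBox pi f /\ b = f
  | RBoxC pi f => a = FBoxC pi f /\ b = f
  | RSeqR p q f => (a = FBox (PSeq p q) f /\ b = FBox p (FBox q f)) \/ b = a
  | RUnR p q f =>
      (a = FBox (PUn p q) f /\ b = FBox (if Nat.eqb k 0 then p else q) f) \/ b = a
  | RTestR f g => (a = FBox (PTest f) g /\ b = g) \/ b = a
  | RCs p f =>
      if Nat.eqb k 0 then (a = FBox (PStar p) f /\ b = f) \/ b = a
      else (a = FBox (PStar p) f /\ b = FBox p (FBox (PStar p) f)) \/ b = a
  | _ => b = a
  end.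

Definition progress_step (r : rname) (k : nat) (a b : formula) : Prop :=
  match r with
  | RCs p f => k = 1 /\ a = FBox (PStar p) f /\ b = FBox p (FBox (PStar p) f)
  | _ => False
  end.

Definition trace_at (t : ptree) (u : list nat) (k : nat) (a b : formula) : Prop :=
  exists s r cs, subtree_at t u = Some (PNode s r cs) /\ In a (snd s) /\ trace_step r k a b.

Definition progress_at (t : ptree) (u : list nat) (k : nat) (a b : formula) : Prop :=
  exists s r cs, subtree_at t u = Some (PNode s r cs) /\ progress_step r k a b.

Definition global_trace_condition (t : ptree) (C : list nat -> list nat) : Prop :=
  forall (p : nat -> list nat) (ks : nat -> nat),
    (forall i, edge t C (p i) (ks i) (p (S i))) ->
    exists (n : nat) (tau : nat -> formula),
      (forall i, trace_at t (p (n + i)) (ks (n + i)) (tau i) (tau (S i))) /\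
      (forall m, exists j, m <= j /\ progress_at t (p (n + j)) (ks (n + j)) (tau j) (tau (S j))).

Definition CGTPDL_provable (s : sequent) : Prop :=
  exists (t : ptree) (C : list nat -> list nat),
    preproof t C /\ seq_eq (label t) s /\ global_trace_condition t C.

End TPDL.

(** Suppose the root sequent fails at a world of some model. Read upwards, every rule
    passes a falsifying world from its conclusion to one of its premises, so the
    derivation graph contains an infinite path of falsified sequents. Measure a
    falsified formula by the least number of star iterations in a witness of its
    falsity. Choosing each premise and world according to a least witness, this measure
    never increases along a trace and strictly decreases at a progress point, because
    unfolding [[π*]φ] into [[π][π*]φ] consumes one iteration of the witnessing
    [π*]-path. An infinitely progressing trace would therefore be an infinite
    descent in [nat]. *)

From Stdlib Require Import List Relations Arith Lia Classical ClassicalEpsilon.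
Import ListNotations.
Set Implicit Arguments.
Unset Strict Implicit.

Lemma Forall2_nth_error_r {A B : Type} (R : A -> B -> Prop) xs ys k y :
  Forall2 R xs ys -> nth_error ys k = Some y -> exists x, nth_error xs k = Some x /\ R x y.
Proof.
  intros Hxy; revert k.
  induction Hxy as [|x y' xs ys Hxy' _ IH]; intros [|k] Hk; try discriminate.
  - injection Hk as <-. exists x; auto.
  - exact (IH k Hk).
Qed.

Lemma labelled_path {A L : Type} (P : A -> Prop) (R : A -> L -> A -> Prop) :
  (forall x, P x -> exists k y, P y /\ R x k y) ->
  forall x0, P x0 ->
  exists (xs : nat -> A) (ks : nat -> L),
    xs 0 = x0 /\ (forall i, P (xs i)) /\ (forall i, R (xs i) (ks i) (xs (S i))).
Proof.
  intros Hstep x0 Hx0.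
  assert (next : forall x : {x | P x},
             {ky : L * {y | P y} | R (proj1_sig x) (fst ky) (proj1_sig (snd ky))}).
  { intros [x Hx]. apply constructive_indefinite_description.
    destruct (Hstep x Hx) as (k & y & Hy & Hxy). exists (k, exist P y Hy); exact Hxy. }
  pose (fix xs i := match i with
                    | 0 => exist P x0 Hx0
                    | S i => snd (proj1_sig (next (xs i)))
                    end) as xs.
  exists (fun i => proj1_sig (xs i)), (fun i => fst (proj1_sig (next (xs i)))).
  split; [reflexivity|]; split.
  - intros i; exact (proj2_sig (xs i)).
  - intros i; exact (proj2_sig (next (xs i))).
Qed.

Lemma infinite_descent (Q : nat -> nat -> Prop) :
  (forall i N, Q i N -> Q (S i) N) ->
  (forall i, exists j, i <= j /\ forall N, Q j N -> exists N', N' < N /\ Q (S j) N') ->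
  forall i N, ~ Q i N.
Proof.
  intros Hstep Hdesc i N; revert i.
  induction N as [N IH] using lt_wf_ind; intros i HQi.
  assert (HQ : forall j, i <= j -> Q j N) by (induction 1; auto).
  destruct (Hdesc i) as (j & Hij & Hj).
  destruct (Hj N (HQ j Hij)) as (N' & HN' & HQ'). exact (IH N' HN' _ HQ').
Qed.

Section Refutations.
Context {Prp AtProg : Type} (M : model Prp AtProg).
Local Notation form := (formula Prp AtProg).
Local Notation prog := (program Prp AtProg).

(* [run π w v c]: a witness of [w R_π v] in which star loops are iterated [c] times. *)
Inductive run : prog -> W M -> W M -> nat -> Prop :=
| run_at a w v : Racc M a w v -> run (PAt Prp a) w v 0
| run_seq p q w u v c1 c2 : run p w u c1 -> run q u v c2 -> run (PSeq p q) w v (c1 + c2)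
| run_unl p q w v c : run p w v c -> run (PUn p q) w v c
| run_unr p q w v c : run q w v c -> run (PUn p q) w v c
| run_refl p w : run (PStar p) w w 0
| run_step p w u v c1 c2 :
    run p w u c1 -> run (PStar p) u v c2 -> run (PStar p) w v (S (c1 + c2))
| run_test f w : sat M f w -> run (PTest f) w w 0.

Inductive refutation : form -> W M -> nat -> Prop :=
| refutation_bot w : refutation (@FBot Prp AtProg) w 0
| refutation_atom p w : ~ Val M w p -> refutation (FAtom AtProg p) w 0
| refutation_imp f g w n : sat M f w -> refutation g w n -> refutation (FImp f g) w n
| refutation_box pi f w v c n :
    run pi w v c -> refutation f v n -> refutation (FBox pi f) w (c + n)
| refutation_boxc pi f w v c n :
    run pi v w c -> refutation f v n -> refutation (FBoxC pi f) w (c + n).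

Lemma run_rel pi w v c : run pi w v c -> rel M pi w v.
Proof.
  induction 1; simpl.
  - assumption.
  - exists u; auto.
  - left; assumption.
  - right; assumption.
  - apply rt_refl.
  - apply rt_trans with u; [apply rt_step|]; assumption.
  - auto.
Qed.

Lemma rel_run pi w v : rel M pi w v -> exists c, run pi w v c.
Proof.
  revert w v; induction pi as [a|p IHp q IHq|p IHp q IHq|p IHp|f]; simpl; intros w v H.
  - exists 0; constructor; assumption.
  - destruct H as (u & Hwu & Huv).
    destruct (IHp _ _ Hwu) as [c1 H1], (IHq _ _ Huv) as [c2 H2].
    exists (c1 + c2); econstructor; eauto.
  - destruct H as [H|H]; [destruct (IHp _ _ H) as [c Hc] | destruct (IHq _ _ H) as [c Hc]];
      exists c; constructor; assumption.
  - apply clos_rt_rt1n in H. induction H as [w|w u v Hwu _ [c2 H2]].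
    + exists 0; constructor.
    + destruct (IHp _ _ Hwu) as [c1 H1]. exists (S (c1 + c2)); econstructor; eauto.
  - destruct H as [<- H]. exists 0; constructor; assumption.
Qed.

Lemma refutation_not_sat f w n : refutation f w n -> ~ sat M f w.
Proof.
  induction 1; simpl; auto; intros Hsat; apply IHrefutation; auto.
  all: apply Hsat; eapply run_rel; eauto.
Qed.

Lemma not_sat_refutation f w : ~ sat M f w -> exists n, refutation f w n.
Proof.
  revert w; induction f as [|a|f IHf g IHg|pi f IHf|pi f IHf]; simpl; intros w H.
  - exists 0; constructor.
  - exists 0; constructor; assumption.
  - apply imply_to_and in H as [Hf Hg]. destruct (IHg _ Hg) as [n Hn].
    exists n; constructor; assumption.
  - apply not_all_ex_not in H as [v H]. apply imply_to_and in H as [Hwv Hv].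
    destruct (rel_run Hwv) as [c Hc], (IHf _ Hv) as [n Hn].
    exists (c + n); econstructor; eauto.
  - apply not_all_ex_not in H as [v H]. apply imply_to_and in H as [Hvw Hv].
    destruct (rel_run Hvw) as [c Hc], (IHf _ Hv) as [n Hn].
    exists (c + n); econstructor; eauto.
Qed.

Lemma run_un_inv p q w v c : run (PUn p q) w v c -> run p w v c \/ run q w v c.
Proof. inversion 1; auto. Qed.

Lemma run_star_inv p w v c : run (PStar p) w v c ->
  (v = w /\ c = 0) \/
  exists u c1 c2, run p w u c1 /\ run (PStar p) u v c2 /\ c = S (c1 + c2).
Proof. inversion 1; subst; [left | right]; eauto 10. Qed.

Lemma refutation_imp_inv f g w n : refutation (FImp f g) w n -> sat M f w /\ refutation g w n.
Proof. inversion 1; auto. Qed.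

Lemma refutation_box_inv pi f w m : refutation (FBox pi f) w m ->
  exists v c n, run pi w v c /\ refutation f v n /\ m = c + n.
Proof. inversion 1; eauto 10. Qed.

Lemma refutation_boxc_inv pi f w m : refutation (FBoxC pi f) w m ->
  exists v c n, run pi v w c /\ refutation f v n /\ m = c + n.
Proof. inversion 1; eauto 10. Qed.

Lemma refutation_box_seq p q f w n :
  refutation (FBox (PSeq p q) f) w n -> refutation (FBox p (FBox q f)) w n.
Proof.
  intros (v & c & n' & Hrun & Hf & ->)%refutation_box_inv.
  inversion Hrun as [| ? ? ? u ? c1 c2 H1 H2 | | | | |]; subst.
  rewrite <- Nat.add_assoc. econstructor; [eassumption|]. econstructor; eassumption.
Qed.

Lemma refutation_box_test f g w n :
  refutation (FBox (PTest f) g) w n -> sat M f w /\ refutation g w n.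
Proof.
  intros (v & c & n' & Hrun & Hg & ->)%refutation_box_inv.
  inversion Hrun; subst. auto.
Qed.

Definition least_refutation f w m :=
  refutation f w m /\ forall n, refutation f w n -> m <= n.

Lemma least_refutation_exists f w : ~ sat M f w -> exists m, least_refutation f w m.
Proof.
  intros Hf.
  destruct (dec_inh_nat_subset_has_unique_least_element (refutation f w)) as (m & Hm & _).
  - intros n; apply classic.
  - exact (not_sat_refutation Hf).
  - exists m; exact Hm.
Qed.

Definition refuted_within f w N := exists n, n <= N /\ refutation f w n.

Lemma refuted_within_map f w g w' N :
  (forall n, refutation f w n -> refutation g w' n) ->
  refuted_within f w N -> refuted_within g w' N.
Proof. intros Hfg (n & HnN & Hn). exists n; auto. Qed.

Lemma least_refutation_le f w m N : least_refutation f w m -> refuted_within f w N -> m <= N.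
Proof. intros [_ Hmin] (n & HnN & Hn). specialize (Hmin n Hn). lia. Qed.

Definition falsifies w (s : sequent Prp AtProg) :=
  (forall f, In f (fst s) -> sat M f w) /\ (forall f, In f (snd s) -> ~ sat M f w).

Lemma falsifies_seq_eq w s s' : seq_eq s s' -> falsifies w s <-> falsifies w s'.
Proof.
  intros [HG HD]; split; intros [HGw HDw]; split; intros f Hf.
  all: first [apply HGw | apply HDw]; first [apply HG | apply HD]; assumption.
Qed.

Lemma falsifies_cons_l w f G D : falsifies w (f :: G, D) <-> sat M f w /\ falsifies w (G, D).
Proof. unfold falsifies; simpl; firstorder congruence. Qed.

Lemma falsifies_cons_r w f G D : falsifies w (G, f :: D) <-> ~ sat M f w /\ falsifies w (G, D).
Proof. unfold falsifies; simpl; firstorder congruence. Qed.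

Definition descends r k w w' :=
  (forall a b N, trace_step r k a b -> refuted_within a w N -> refuted_within b w' N) /\
  (forall a b N, progress_step r k a b -> refuted_within a w N ->
     exists N', N' < N /\ refuted_within b w' N').

Lemma descends_principal r k w P Q :
  (forall a b, trace_step r k a b -> (a = P /\ b = Q) \/ b = a) ->
  (forall a b, ~ progress_step r k a b) ->
  (forall N, refuted_within P w N -> refuted_within Q w N) ->
  descends r k w w.
Proof.
  intros Htrace Hprog HPQ; split.
  - intros a b N Hab; destruct (Htrace a b Hab) as [[-> ->] | ->]; auto.
  - intros a b N Hab; contradiction (Hprog a b Hab).
Qed.

Definition reflects_falsity r C (Ps : list (sequent Prp AtProg)) :=
  forall w, falsifies w C ->
  exists k P w', nth_error Ps k = Some P /\ falsifies w' P /\ descends r k w w'.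

Lemma reflects_falsity_inst r c ps C Ps :
  inst c ps C Ps -> reflects_falsity r C Ps -> reflects_falsity r c ps.
Proof.
  intros [Hc Hps] HC w Hw.
  apply (falsifies_seq_eq w Hc) in Hw.
  destruct (HC w Hw) as (k & P & w' & HkP & HP & Hd).
  destruct (Forall2_nth_error_r Hps HkP) as (p & Hkp & Hpp).
  exists k, p, w'; split; [exact Hkp|]; split; [|exact Hd].
  apply (falsifies_seq_eq w' Hpp); exact HP.
Qed.

Lemma reflects_frame r C Ps :
  (forall k a b, trace_step r k a b -> b = a) -> (forall k a b, ~ progress_step r k a b) ->
  (forall w, falsifies w C -> exists k P, nth_error Ps k = Some P /\ falsifies w P) ->
  reflects_falsity r C Ps.
Proof.
  intros Htrace Hprog HC w Hw. destruct (HC w Hw) as (k & P & HkP & HP).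
  exists k, P, w; split; [exact HkP|]; split; [exact HP|]; split.
  - intros a b N Hab; rewrite (Htrace k a b Hab); trivial.
  - intros a b N Hab; contradiction (Hprog k a b Hab).
Qed.

Lemma reflects_ax r c ps x : In x (fst c) -> In x (snd c) -> reflects_falsity r c ps.
Proof. intros HG HD w [HGw HDw]. contradiction (HDw x HD (HGw x HG)). Qed.

Lemma reflects_bot r (c : sequent Prp AtProg) ps :
  In (@FBot Prp AtProg) (fst c) -> reflects_falsity r c ps.
Proof. intros HG w [HGw _]. contradiction (HGw _ HG). Qed.

Lemma reflects_wk (c : sequent Prp AtProg) G D :
  incl G (fst c) -> incl D (snd c) -> reflects_falsity (RWk Prp AtProg) c [(G, D)].
Proof.
  intros HG HD. apply reflects_frame; try easy.
  intros w [HGw HDw]. exists 0, (G, D); split; [reflexivity|].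
  split; intros f Hf; [apply HGw, HG | apply HDw, HD]; exact Hf.
Qed.

Lemma reflects_cut f G D : reflects_falsity (RCut f) (G, D) [(G, f :: D); (f :: G, D)].
Proof.
  apply reflects_frame; try easy. intros w Hw.
  destruct (classic (sat M f w)) as [Hf | Hf].
  - exists 1, (f :: G, D); split; [reflexivity|]. apply falsifies_cons_l; auto.
  - exists 0, (G, f :: D); split; [reflexivity|]. apply falsifies_cons_r; auto.
Qed.

Lemma reflects_impL f g G D :
  reflects_falsity (RImpL f g) (FImp f g :: G, D) [(G, f :: D); (g :: G, D)].
Proof.
  apply reflects_frame; try easy. intros w [Hfg Hw]%falsifies_cons_l.
  destruct (classic (sat M f w)) as [Hf | Hf].
  - exists 1, (g :: G, D); split; [reflexivity|]. apply falsifies_cons_l; auto.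
  - exists 0, (G, f :: D); split; [reflexivity|]. apply falsifies_cons_r; auto.
Qed.

Lemma reflects_seqL p q f G D :
  reflects_falsity (RSeqL p q f) (FBox (PSeq p q) f :: G, D) [(FBox p (FBox q f) :: G, D)].
Proof.
  apply reflects_frame; try easy. intros w [Hpqf Hw]%falsifies_cons_l.
  exists 0, (FBox p (FBox q f) :: G, D); split; [reflexivity|].
  apply falsifies_cons_l; split; [|exact Hw].
  intros u Hwu v Huv. apply Hpqf. exists u; auto.
Qed.

Lemma reflects_unL p q f G D :
  reflects_falsity (RUnL p q f) (FBox (PUn p q) f :: G, D) [(FBox p f :: FBox q f :: G, D)].
Proof.
  apply reflects_frame; try easy. intros w [Hpqf Hw]%falsifies_cons_l.
  exists 0, (FBox p f :: FBox q f :: G, D); split; [reflexivity|].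
  apply falsifies_cons_l; split; [|apply falsifies_cons_l; split; [|exact Hw]].
  all: intros v Hwv; apply Hpqf; simpl; auto.
Qed.

Lemma reflects_starL p f G D :
  reflects_falsity (RStarL p f) (FBox (PStar p) f :: G, D)
    [(f :: FBox p (FBox (PStar p) f) :: G, D)].
Proof.
  apply reflects_frame; try easy. intros w [Hpf Hw]%falsifies_cons_l.
  exists 0, (f :: FBox p (FBox (PStar p) f) :: G, D); split; [reflexivity|].
  apply falsifies_cons_l; split; [|apply falsifies_cons_l; split; [|exact Hw]].
  - apply Hpf, rt_refl.
  - intros u Hwu v Huv. apply Hpf. apply rt_trans with u; [apply rt_step|]; assumption.
Qed.

Lemma reflects_testL f g G D :
  reflects_falsity (RTestL f g) (FBox (PTest f) g :: G, D) [(G, f :: D); (g :: G, D)].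
Proof.
  apply reflects_frame; try easy. intros w [Hfg Hw]%falsifies_cons_l.
  destruct (classic (sat M f w)) as [Hf | Hf].
  - exists 1, (g :: G, D); split; [reflexivity|].
    apply falsifies_cons_l; split; [apply Hfg; simpl; auto | exact Hw].
  - exists 0, (G, f :: D); split; [reflexivity|]. apply falsifies_cons_r; auto.
Qed.

Lemma reflects_impR f g G D :
  reflects_falsity (RImpR f g) (G, FImp f g :: D) [(f :: G, g :: D)].
Proof.
  intros w [Hfg Hw]%falsifies_cons_r.
  apply imply_to_and in Hfg as [Hf Hg].
  exists 0, (f :: G, g :: D), w; split; [reflexivity|]; split.
  - apply falsifies_cons_l; split; [exact Hf|]. apply falsifies_cons_r; auto.
  - apply descends_principal with (FImp f g) g; try easy.
    intros N; apply refuted_within_map; intros n Hn; apply (refutation_imp_inv Hn).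
Qed.

Lemma reflects_seqR p q f G D :
  reflects_falsity (RSeqR p q f) (G, FBox (PSeq p q) f :: D) [(G, FBox p (FBox q f) :: D)].
Proof.
  intros w [Hpqf Hw]%falsifies_cons_r.
  destruct (not_sat_refutation Hpqf) as [n Hn].
  exists 0, (G, FBox p (FBox q f) :: D), w; split; [reflexivity|]; split.
  - apply falsifies_cons_r; split; [|exact Hw].
    exact (refutation_not_sat (refutation_box_seq Hn)).
  - apply descends_principal with (FBox (PSeq p q) f) (FBox p (FBox q f)); try easy.
    intros N; apply refuted_within_map; intros m; apply refutation_box_seq.
Qed.

Lemma reflects_testR f g G D :
  reflects_falsity (RTestR f g) (G, FBox (PTest f) g :: D) [(f :: G, g :: D)].
Proof.
  intros w [Hfg Hw]%falsifies_cons_r.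
  destruct (not_sat_refutation Hfg) as [n [Hf Hg]%refutation_box_test].
  exists 0, (f :: G, g :: D), w; split; [reflexivity|]; split.
  - apply falsifies_cons_l; split; [exact Hf|].
    apply falsifies_cons_r; split; [exact (refutation_not_sat Hg) | exact Hw].
  - apply descends_principal with (FBox (PTest f) g) g; try easy.
    intros N; apply refuted_within_map; intros m Hm; apply (refutation_box_test Hm).
Qed.

Lemma reflects_unR p q f G D :
  reflects_falsity (RUnR p q f) (G, FBox (PUn p q) f :: D)
    [(G, FBox p f :: D); (G, FBox q f :: D)].
Proof.
  intros w [Hpqf Hw]%falsifies_cons_r.
  destruct (least_refutation_exists Hpqf) as [m Hleast].
  destruct (refutation_box_inv (proj1 Hleast)) as (v & c & n & Hrun & Hf & ->).
  destruct (run_un_inv Hrun) as [Hp | Hq].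
  - assert (Hpf : refutation (FBox p f) w (c + n)) by (econstructor; eassumption).
    exists 0, (G, FBox p f :: D), w; split; [reflexivity|]; split.
    + apply falsifies_cons_r; split; [exact (refutation_not_sat Hpf) | exact Hw].
    + apply descends_principal with (FBox (PUn p q) f) (FBox p f); try easy.
      intros N HN. exists (c + n); split; [exact (least_refutation_le Hleast HN) | exact Hpf].
  - assert (Hqf : refutation (FBox q f) w (c + n)) by (econstructor; eassumption).
    exists 1, (G, FBox q f :: D), w; split; [reflexivity|]; split.
    + apply falsifies_cons_r; split; [exact (refutation_not_sat Hqf) | exact Hw].
    + apply descends_principal with (FBox (PUn p q) f) (FBox q f); try easy.
      intros N HN. exists (c + n); split; [exact (least_refutation_le Hleast HN) | exact Hqf].
Qed.

Lemma reflects_box pi f G D :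
  reflects_falsity (RBox pi f) (map (FBox pi) G, FBox pi f :: D)
    [(G, f :: map (FBoxC pi) D)].
Proof.
  intros w [Hpif [HGw HDw]]%falsifies_cons_r.
  destruct (least_refutation_exists Hpif) as [m Hleast].
  destruct (refutation_box_inv (proj1 Hleast)) as (v & c & n & Hrun & Hf & ->).
  pose proof (run_rel Hrun) as Hwv.
  exists 0, (G, f :: map (FBoxC pi) D), v; split; [reflexivity|]; split.
  - apply falsifies_cons_r; split; [exact (refutation_not_sat Hf)|]. split; simpl.
    + intros g Hg. exact (HGw _ (in_map _ _ _ Hg) v Hwv).
    + intros d (e & <- & He)%in_map_iff Hsat. exact (HDw e He (Hsat w Hwv)).
  - split; [|easy].
    intros a b N [-> ->] HN. exists n; split; [|exact Hf].
    pose proof (least_refutation_le Hleast HN); lia.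
Qed.

Lemma reflects_boxC pi f G D :
  reflects_falsity (RBoxC pi f) (map (FBoxC pi) G, FBoxC pi f :: D)
    [(G, f :: map (FBox pi) D)].
Proof.
  intros w [Hpif [HGw HDw]]%falsifies_cons_r.
  destruct (least_refutation_exists Hpif) as [m Hleast].
  destruct (refutation_boxc_inv (proj1 Hleast)) as (v & c & n & Hrun & Hf & ->).
  pose proof (run_rel Hrun) as Hvw.
  exists 0, (G, f :: map (FBox pi) D), v; split; [reflexivity|]; split.
  - apply falsifies_cons_r; split; [exact (refutation_not_sat Hf)|]. split; simpl.
    + intros g Hg. exact (HGw _ (in_map _ _ _ Hg) v Hvw).
    + intros d (e & <- & He)%in_map_iff Hsat. exact (HDw e He (Hsat w Hvw)).
  - split; [|easy].
    intros a b N [-> ->] HN. exists n; split; [|exact Hf].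
    pose proof (least_refutation_le Hleast HN); lia.
Qed.

(* The premise is chosen by whether the [π*]-path of a least refutation is empty. *)
Lemma reflects_cs p f G D :
  reflects_falsity (RCs p f) (G, FBox (PStar p) f :: D)
    [(G, f :: D); (G, FBox p (FBox (PStar p) f) :: D)].
Proof.
  intros w [Hpf Hw]%falsifies_cons_r.
  destruct (least_refutation_exists Hpf) as [m Hleast].
  destruct (refutation_box_inv (proj1 Hleast)) as (v & c & n & Hrun & Hf & ->).
  destruct (run_star_inv Hrun) as [[-> ->] | (u & c1 & c2 & Hp & Hstar & ->)].
  - exists 0, (G, f :: D), w; split; [reflexivity|]; split.
    + apply falsifies_cons_r; split; [exact (refutation_not_sat Hf) | exact Hw].
    + apply descends_principal with (FBox (PStar p) f) f.
      * intros a b Hab; exact Hab.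
      * intros a b [H _]; discriminate.
      * intros N HN. exists n; split; [exact (least_refutation_le Hleast HN) | exact Hf].
  - assert (Hunf : refutation (FBox p (FBox (PStar p) f)) w (c1 + (c2 + n)))
      by (econstructor; [eassumption | econstructor; eassumption]).
    exists 1, (G, FBox p (FBox (PStar p) f) :: D), w; split; [reflexivity|]; split.
    + apply falsifies_cons_r; split; [exact (refutation_not_sat Hunf) | exact Hw].
    + split.
      * intros a b N [[-> ->] | ->] HN; [|exact HN].
        exists (c1 + (c2 + n)); split; [|exact Hunf].
        pose proof (least_refutation_le Hleast HN); lia.
      * intros a b N (_ & -> & ->) HN.
        exists (c1 + (c2 + n)); split.
        -- pose proof (least_refutation_le Hleast HN); lia.
        -- exists (c1 + (c2 + n)); split; [reflexivity | exact Hunf].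
Qed.

Lemma rule_inst_reflects_falsity r c ps : rule_inst r c ps -> reflects_falsity r c ps.
Proof.
  destruct r; simpl.
  - intros [_ (x & HG & HD)]; exact (reflects_ax _ _ HG HD).
  - intros [_ HG]; exact (reflects_bot _ _ HG).
  - intros (G & D & Hi); apply (reflects_falsity_inst Hi), reflects_impL.
  - intros (G & D & Hi); apply (reflects_falsity_inst Hi), reflects_impR.
  - intros (G & D & -> & HG & HD); exact (reflects_wk HG HD).
  - intros (G & D & Hi); apply (reflects_falsity_inst Hi), reflects_cut.
  - intros (G & D & Hi); apply (reflects_falsity_inst Hi), reflects_box.
  - intros (G & D & Hi); apply (reflects_falsity_inst Hi), reflects_boxC.
  - intros (G & D & Hi); apply (reflects_falsity_inst Hi), reflects_seqL.
  - intros (G & D & Hi); apply (reflects_falsity_inst Hi), reflects_seqR.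
  - intros (G & D & Hi); apply (reflects_falsity_inst Hi), reflects_unL.
  - intros (G & D & Hi); apply (reflects_falsity_inst Hi), reflects_unR.
  - intros (G & D & Hi); apply (reflects_falsity_inst Hi), reflects_starL.
  - intros (G & D & Hi); apply (reflects_falsity_inst Hi), reflects_testL.
  - intros (G & D & Hi); apply (reflects_falsity_inst Hi), reflects_testR.
  - intros (G & D & Hi); apply (reflects_falsity_inst Hi), reflects_cs.
Qed.

End Refutations.

Lemma subtree_at_child {Prp AtProg} (t : ptree Prp AtProg) u s r cs k c :
  subtree_at t u = Some (PNode s r cs) -> nth_error cs k = Some c ->
  subtree_at t (u ++ [k]) = Some c.
Proof.
  revert t; induction u as [|i u IH]; intros t Hu Hk; simpl in *.
  - injection Hu as ->. rewrite Hk; reflexivity.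
  - destruct t as [s' r' cs'|s']; [|discriminate].
    destruct (nth_error cs' i); [exact (IH _ Hu Hk) | discriminate].
Qed.

Section Countermodel.
Context {Prp AtProg : Type} (M : model Prp AtProg) (t : ptree Prp AtProg)
  (C : list nat -> list nat) (Hpre : preproof t C).

Definition falsified_node (x : list nat * W M) :=
  exists s r cs, subtree_at t (fst x) = Some (PNode s r cs) /\ falsifies (snd x) s.

Definition descent_edge (x : list nat * W M) k (y : list nat * W M) :=
  edge t C (fst x) k (fst y) /\
  forall s r cs, subtree_at t (fst x) = Some (PNode s r cs) -> descends r k (snd x) (snd y).

Lemma falsified_address u c w :
  subtree_at t u = Some c -> falsifies w (label c) ->
  falsified_node (match c with PNode _ _ _ => u | PBud _ => C u end, w).
Proof.
  intros Hu Hw. destruct c as [s r cs|s].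
  - exists s, r, cs; auto.
  - destruct (proj2 Hpre u s Hu) as (s' & r & cs & Hcomp & _ & Hs's).
    exists s', r, cs; split; [exact Hcomp|]. apply (falsifies_seq_eq w Hs's); exact Hw.
Qed.

Lemma falsified_node_step x :
  falsified_node x -> exists k y, falsified_node y /\ descent_edge x k y.
Proof.
  destruct x as [u w]; intros (s & r & cs & Hu & Hw); simpl in *.
  destruct (rule_inst_reflects_falsity (proj1 Hpre _ _ _ _ Hu) Hw)
    as (k & s' & w' & Hks' & Hw' & Hdesc).
  rewrite nth_error_map in Hks'.
  destruct (nth_error cs k) as [c|] eqn:Hkc; [injection Hks' as <- | discriminate].
  exists k, (match c with PNode _ _ _ => u ++ [k] | PBud _ => C (u ++ [k]) end, w'); split.
  - exact (falsified_address (subtree_at_child Hu Hkc) Hw').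
  - split; simpl.
    + exists s, r, cs, c; split; [exact Hu|]; split; [exact Hkc|]. destruct c; reflexivity.
    + intros s0 r0 cs0 Hu0. rewrite Hu in Hu0. injection Hu0 as <- <- <-. exact Hdesc.
Qed.

Lemma gtc_no_falsified_node x : global_trace_condition t C -> ~ falsified_node x.
Proof.
  intros Hgtc Hx.
  destruct (labelled_path falsified_node_step Hx) as (xs & ks & _ & Hfals & Hedge).
  destruct (Hgtc (fun i => fst (xs i)) ks (fun i => proj1 (Hedge i)))
    as (n & tau & Htrace & Hprog).
  pose (Q i N := refuted_within (tau i) (snd (xs (n + i))) N).
  assert (Hmono : forall i N, Q i N -> Q (S i) N).
  { intros i N HN. destruct (Htrace i) as (s & r & cs & Hs & _ & Hstep).
    unfold Q; rewrite Nat.add_succ_r.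
    exact (proj1 (proj2 (Hedge (n + i)) s r cs Hs) _ _ _ Hstep HN). }
  assert (Hdesc : forall i, exists j, i <= j /\
            forall N, Q j N -> exists N', N' < N /\ Q (S j) N').
  { intros i. destruct (Hprog i) as (j & Hij & s & r & cs & Hs & Hprogj).
    exists j; split; [exact Hij|]. intros N HN.
    unfold Q; rewrite Nat.add_succ_r.
    exact (proj2 (proj2 (Hedge (n + j)) s r cs Hs) _ _ _ Hprogj HN). }
  destruct (Htrace 0) as (s & r & cs & Hs & Hin & _).
  destruct (Hfals (n + 0)) as (s' & r' & cs' & Hs' & Hw).
  rewrite Hs in Hs'. injection Hs' as <- _ _.
  destruct (not_sat_refutation (proj2 Hw _ Hin)) as [m Hm].
  apply (infinite_descent Hmono Hdesc (i := 0) (N := m)).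
  exists m; split; [reflexivity | exact Hm].
Qed.

End Countermodel.

Theorem mainTheorem5 (Prp AtProg : Type) (Gamma Delta : list (formula Prp AtProg)) :
  CGTPDL_provable (Gamma, Delta) -> forall M : model Prp AtProg, valid M (Gamma, Delta).
Proof.
  intros (t & C & Hpre & Hroot & Hgtc) M w HGamma.
  apply NNPP; intros Hnone.
  assert (Hw : falsifies w (label t)).
  { apply (falsifies_seq_eq w Hroot); split; [exact HGamma|].
    intros f Hf Hsat; apply Hnone; exists f; auto. }
  exact (gtc_no_falsified_node Hpre Hgtc (falsified_address Hpre (u := []) eq_refl Hw)).
Qed.
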